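(* Let $X$ be a Hilbert space and let $B$ be a bounded self-adjoint operator on $X$ with spectral radius $\rho(B)=\|B\|=1$ such that $-1$ is not an eigenvalue of $B$. Let $f\in X$ and suppose the equation $x=Bx+f$ has at least one solution in $X$. Let $P$ be the orthogonal projection onto $\ker(I-B)$ (the eigenspace of $B$ for the eigenvalue $1$). Then for every initial point $x_0\in X$ the successive approximations $x_{n+1}=Bx_n+f$ ($n=0,1,2,\dots$) converge in norm to a solution of $x=Bx+f$; more precisely, they converge to the (unique) solution $x_*$ of $x=Bx+f$ satisfying $Px_*=Px_0$.
   Context: $I$ denotes the identity operator on $X$. *)

From Stdlib Require Import Reals Lra.
Open Scope R_scope.

Record Hilbert := {
  hcar :> Type;
  hzero : hcar;
  hadd : hcar -> hcar -> hcar;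
  hopp : hcar -> hcar;
  hscal : R -> hcar -> hcar;
  hinner : hcar -> hcar -> R;
  hadd_assoc : forall x y z, hadd x (hadd y z) = hadd (hadd x y) z;
  hadd_comm : forall x y, hadd x y = hadd y x;
  hadd_0l : forall x, hadd hzero x = x;
  hadd_oppr : forall x, hadd x (hopp x) = hzero;
  hscal_assoc : forall a b x, hscal a (hscal b x) = hscal (a * b) x;
  hscal_1 : forall x, hscal 1 x = x;
  hscal_addr : forall a x y, hscal a (hadd x y) = hadd (hscal a x) (hscal a y);
  hscal_addl : forall a b x, hscal (a + b) x = hadd (hscal a x) (hscal b x);
  hinner_sym : forall x y, hinner x y = hinner y x;
  hinner_addl : forall x y z, hinner (hadd x y) z = hinner x z + hinner y z;
  hinner_scall : forall a x y, hinner (hscal a x) y = a * hinner x y;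
  hinner_pos : forall x, 0 <= hinner x x;
  hinner_def : forall x, hinner x x = 0 -> x = hzero;
  hcomplete : forall u : nat -> hcar,
    (forall eps, eps > 0 -> exists N, forall n m, (n >= N)%nat -> (m >= N)%nat ->
        sqrt (hinner (hadd (u n) (hopp (u m))) (hadd (u n) (hopp (u m)))) < eps) ->
    exists l, forall eps, eps > 0 -> exists N, forall n, (n >= N)%nat ->
        sqrt (hinner (hadd (u n) (hopp l)) (hadd (u n) (hopp l))) < eps
}.

Arguments hzero {h}.
Arguments hadd {h}.
Arguments hopp {h}.
Arguments hscal {h}.
Arguments hinner {h}.

Definition hsub {X : Hilbert} (x y : X) : X := hadd x (hopp y).
Definition hnorm {X : Hilbert} (x : X) : R := sqrt (hinner x x).

Definition hconverges {X : Hilbert} (u : nat -> X) (l : X) : Prop :=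
  forall eps, eps > 0 -> exists N, forall n, (n >= N)%nat -> hnorm (hsub (u n) l) < eps.

Definition is_linear {X : Hilbert} (T : X -> X) : Prop :=
  (forall x y, T (hadd x y) = hadd (T x) (T y)) /\
  (forall a x, T (hscal a x) = hscal a (T x)).

Definition is_bounded_linear {X : Hilbert} (T : X -> X) : Prop :=
  is_linear T /\ exists M, forall x, hnorm (T x) <= M * hnorm x.

Definition op_norm_is {X : Hilbert} (T : X -> X) (c : R) : Prop :=
  is_lub (fun r => exists x : X, hnorm x <= 1 /\ r = hnorm (T x)) c.

Definition self_adjoint {X : Hilbert} (T : X -> X) : Prop :=
  forall x y, hinner (T x) y = hinner x (T y).

Definition resolvent {X : Hilbert} (T : X -> X) (lam : R) : Prop :=
  exists S : X -> X, is_bounded_linear S /\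
    (forall x, S (hsub (T x) (hscal lam x)) = x) /\
    (forall x, hsub (T (S x)) (hscal lam (S x)) = x).

Definition spectrum {X : Hilbert} (T : X -> X) (lam : R) : Prop :=
  ~ resolvent T lam.

Definition spectral_radius_is {X : Hilbert} (T : X -> X) (r : R) : Prop :=
  is_lub (fun s => exists lam, spectrum T lam /\ s = Rabs lam) r.

Definition is_eigenvalue {X : Hilbert} (T : X -> X) (lam : R) : Prop :=
  exists x : X, x <> hzero /\ T x = hscal lam x.

Definition fixed_space {X : Hilbert} (T : X -> X) (x : X) : Prop := T x = x.

Definition is_orth_proj {X : Hilbert} (K : X -> Prop) (P : X -> X) : Prop :=
  forall x, K (P x) /\ (forall y, K y -> hinner (hsub x (P x)) y = 0).

Fixpoint iterates {X : Hilbert} (T : X -> X) (f x0 : X) (n : nat) : X :=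
  match n with
  | O => x0
  | S k => hadd (T (iterates T f x0 k)) f
  end.

From Stdlib Require Import Reals Lra Lia.
Open Scope R_scope.

(** Subtracting any solution [xh] turns the iteration into [x_n = xh + B^n (x0 - xh)], so
    everything reduces to the convergence of the powers [B^n z].  Since [B] is a self-adjoint
    contraction, [|B^n z|^2] decreases to some limit, and
    [|B^(2n) z - B^(2m) z|^2 = |B^(2n) z|^2 - 2 |B^(n+m) z|^2 + |B^(2m) z|^2]
    tends to [0]: the even powers are Cauchy and converge to some [y] with [B^2 y = y].
    Then [B y - y] is either [0] or an eigenvector for [-1], so [B y = y], and the odd powers
    converge to [y] too.  Each [B^n z - z] is orthogonal to [ker (I - B)], hence so is
    [y - z], which identifies [xh + y] as the solution with the prescribed projection. *)

Section VectorAlgebra.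
Context {X : Hilbert}.
Implicit Types a b c x k : X.

Lemma hadd_0r x : hadd x hzero = x.
Proof. rewrite hadd_comm; apply hadd_0l. Qed.

Lemma hadd_oppl x : hadd (hopp x) x = hzero.
Proof. rewrite hadd_comm; apply hadd_oppr. Qed.

Lemma hadd_cancell a b c : hadd a b = hadd a c -> b = c.
Proof.
  intros E.
  rewrite <- (hadd_0l _ b), <- (hadd_0l _ c), <- (hadd_oppl a), <- !hadd_assoc, E.
  reflexivity.
Qed.

Lemma hscal_0 x : hscal 0 x = hzero.
Proof.
  apply (hadd_cancell (hscal 0 x)).
  rewrite <- hscal_addl, Rplus_0_r, hadd_0r. reflexivity.
Qed.

Lemma hopp_unique a b : hadd a b = hzero -> b = hopp a.
Proof. intros E. apply (hadd_cancell a). rewrite E, hadd_oppr. reflexivity. Qed.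

Lemma hscal_N1 x : hscal (-1) x = hopp x.
Proof.
  apply hopp_unique. rewrite <- (hscal_1 _ x) at 1.
  rewrite <- hscal_addl, Rplus_opp_r. apply hscal_0.
Qed.

Lemma hoppK x : hopp (hopp x) = x.
Proof. symmetry; apply hopp_unique, hadd_oppl. Qed.

Lemma hoppD a b : hopp (hadd a b) = hadd (hopp a) (hopp b).
Proof.
  symmetry; apply hopp_unique.
  rewrite (hadd_comm _ (hopp a)), hadd_assoc, <- (hadd_assoc _ a b), hadd_oppr, hadd_0r.
  apply hadd_oppr.
Qed.

Lemma hsub_eq0 a b : hsub a b = hzero -> a = b.
Proof. intros E. apply hopp_unique in E. rewrite <- (hoppK b), E, hoppK. reflexivity. Qed.

Lemma hadd_subK a b : hadd b (hsub a b) = a.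
Proof. unfold hsub. rewrite hadd_comm, <- hadd_assoc, hadd_oppl, hadd_0r. reflexivity. Qed.

Lemma hadd_AC a b c : hadd (hadd a b) c = hadd (hadd a c) b.
Proof. rewrite <- !hadd_assoc, (hadd_comm _ b c). reflexivity. Qed.

Lemma hsubDl a b c : hsub (hadd c a) (hadd c b) = hsub a b.
Proof.
  unfold hsub. rewrite hoppD, (hadd_comm _ c a), <- hadd_assoc, (hadd_assoc _ c), hadd_oppr, hadd_0l.
  reflexivity.
Qed.

Lemma hsubDr a b c : hsub (hadd a c) (hadd b c) = hsub a b.
Proof. rewrite (hadd_comm _ a), (hadd_comm _ b). apply hsubDl. Qed.

Lemma hsub_split a b c : hsub a c = hadd (hsub a b) (hsub b c).
Proof. unfold hsub. rewrite <- hadd_assoc, (hadd_assoc _ (hopp b)), hadd_oppl, hadd_0l. reflexivity. Qed.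

Lemma hinner_addr x a b : hinner x (hadd a b) = hinner x a + hinner x b.
Proof. rewrite hinner_sym, hinner_addl, (hinner_sym _ a), (hinner_sym _ b). reflexivity. Qed.

Lemma hinner_scalr r x y : hinner x (hscal r y) = r * hinner x y.
Proof. rewrite hinner_sym, hinner_scall, hinner_sym. reflexivity. Qed.

Lemma hinner_subl a b k : hinner (hsub a b) k = hinner a k - hinner b k.
Proof. unfold hsub. rewrite hinner_addl, <- hscal_N1, hinner_scall. ring. Qed.

Lemma hinner_subr k a b : hinner k (hsub a b) = hinner k a - hinner k b.
Proof. rewrite !(hinner_sym _ k). apply hinner_subl. Qed.

End VectorAlgebra.

Definition hsqnorm {X : Hilbert} (x : X) : R := hinner x x.

Section SquaredNorm.
Context {X : Hilbert}.
Implicit Types a b k x : X.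

Lemma hsqnorm_ge0 x : 0 <= hsqnorm x.
Proof. apply hinner_pos. Qed.

Lemma hsqnorm_eq0 x : hsqnorm x = 0 -> x = hzero.
Proof. apply hinner_def. Qed.

Lemma hsqnorm_0 : hsqnorm (@hzero X) = 0.
Proof. unfold hsqnorm. rewrite <- (hscal_0 hzero), hinner_scall. ring. Qed.

Lemma hsqnorm_add a b : hsqnorm (hadd a b) = hsqnorm a + 2 * hinner a b + hsqnorm b.
Proof. unfold hsqnorm. rewrite hinner_addl, !hinner_addr, (hinner_sym _ b a). ring. Qed.

Lemma hsqnorm_sub a b : hsqnorm (hsub a b) = hsqnorm a - 2 * hinner a b + hsqnorm b.
Proof. unfold hsqnorm. rewrite hinner_subl, !hinner_subr, (hinner_sym _ b a). ring. Qed.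

Lemma hsqnorm_subC a b : hsqnorm (hsub a b) = hsqnorm (hsub b a).
Proof. rewrite !hsqnorm_sub, hinner_sym. ring. Qed.

Lemma hsqnorm_scal r x : hsqnorm (hscal r x) = r * r * hsqnorm x.
Proof. unfold hsqnorm. rewrite hinner_scall, hinner_scalr. ring. Qed.

Lemma hsqnorm_add_le a b : hsqnorm (hadd a b) <= 2 * hsqnorm a + 2 * hsqnorm b.
Proof.
  pose proof (hsqnorm_ge0 (hsub a b)) as H.
  rewrite hsqnorm_sub in H. rewrite hsqnorm_add. lra.
Qed.

Lemma hnorm_scal r x : hnorm (hscal r x) = Rabs r * hnorm x.
Proof.
  unfold hnorm. fold (hsqnorm (hscal r x)) (hsqnorm x).
  rewrite hsqnorm_scal, sqrt_mult_alt, <- sqrt_Rsqr_abs by nra. reflexivity.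
Qed.

Lemma hnorm_lt_of_sq x e : e > 0 -> hsqnorm x < e * e -> hnorm x < e.
Proof.
  intros He H. unfold hnorm. fold (hsqnorm x).
  rewrite <- (sqrt_square e) by lra. apply sqrt_lt_1_alt. split; [apply hsqnorm_ge0 | exact H].
Qed.

(* Evaluate [|t a - k|^2 >= 0] at [t = (|k|^2 + 1) / c]. *)
Lemma inner_eq_0_of_small k c :
  (forall e, e > 0 -> exists a, hsqnorm a < e /\ hinner a k = c) -> c = 0.
Proof.
  intros Hsmall. destruct (Req_dec c 0) as [|Hc]; [assumption | exfalso].
  pose proof (hsqnorm_ge0 k) as Hk.
  set (t := (hsqnorm k + 1) / c).
  assert (Htc : t * c = hsqnorm k + 1) by (unfold t; field; exact Hc).
  assert (Htt : 0 < t * t) by (destruct (Req_dec t 0) as [E | E]; [rewrite E in Htc; lra | nra]).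
  destruct (Hsmall (/ (t * t))) as [a [Ha Hak]]; [apply Rlt_gt, Rinv_0_lt_compat, Htt |].
  assert (Hsmall_t : t * t * hsqnorm a < 1).
  { apply (Rmult_lt_compat_l (t * t)) in Ha; [| exact Htt].
    rewrite Rinv_r in Ha by lra. exact Ha. }
  pose proof (hsqnorm_ge0 (hsub (hscal t a) k)) as Hq.
  rewrite hsqnorm_sub, hsqnorm_scal, hinner_scall, Hak, Htc in Hq.
  lra.
Qed.

End SquaredNorm.

Definition sq_converges {X : Hilbert} (u : nat -> X) (l : X) : Prop :=
  forall e, e > 0 -> exists N, forall n, (n >= N)%nat -> hsqnorm (hsub (u n) l) < e.

Section Convergence.
Context {X : Hilbert}.
Implicit Types (u : nat -> X) (l : X).

Lemma hconverges_of_sq u l : sq_converges u l -> hconverges u l.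
Proof.
  intros Hu e He. destruct (Hu (e * e)) as [N HN]; [nra |].
  exists N. intros n Hn. apply hnorm_lt_of_sq; auto.
Qed.

Lemma sq_cauchy_converges u :
  (forall e, e > 0 -> exists N, forall n m, (n >= N)%nat -> (m >= N)%nat ->
     hsqnorm (hsub (u n) (u m)) < e) ->
  exists l, sq_converges u l.
Proof.
  intros Hu. destruct (hcomplete X u) as [l Hl].
  - intros e He. destruct (Hu (e * e)) as [N HN]; [nra |].
    exists N. intros n m Hn Hm. apply (hnorm_lt_of_sq (hsub (u n) (u m))); auto.
  - exists l. intros e He. destruct (Hl (sqrt e)) as [N HN]; [apply sqrt_lt_R0; lra |].
    exists N. intros n Hn. apply sqrt_lt_0_alt, HN, Hn.
Qed.

Lemma sq_limit_inner u l k c :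
  sq_converges u l -> (forall n, hinner (u n) k = c) -> hinner l k = c.
Proof.
  intros Hu Huk. apply Rminus_diag_uniq, (inner_eq_0_of_small k).
  intros e He. destruct (Hu e He) as [N HN].
  exists (hsub l (u N)). split.
  - rewrite hsqnorm_subC. apply HN. lia.
  - rewrite hinner_subl, Huk. reflexivity.
Qed.

End Convergence.

Section LinearMaps.
Context {X : Hilbert}.
Variable T : X -> X.
Hypothesis T_linear : is_linear T.
Implicit Types a b x y : X.

Lemma linear_0 : T hzero = hzero.
Proof. rewrite <- (hscal_0 hzero), (proj2 T_linear), !hscal_0. reflexivity. Qed.

Lemma linear_sub a b : T (hsub a b) = hsub (T a) (T b).
Proof. unfold hsub. rewrite (proj1 T_linear), <- !hscal_N1, (proj2 T_linear). reflexivity. Qed.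

Lemma op_norm_bound c : op_norm_is T c -> forall x, hnorm (T x) <= c * hnorm x.
Proof.
  intros [Hub _] x. set (s := hnorm x).
  assert (Hs : 0 <= s) by apply sqrt_pos.
  destruct (Req_dec s 0) as [Hs0 | Hs0].
  - assert (Hx : x = hzero).
    { apply hsqnorm_eq0, sqrt_eq_0; [apply hsqnorm_ge0 | exact Hs0]. }
    rewrite Hs0, Hx, linear_0, Rmult_0_r. unfold hnorm. fold (hsqnorm (@hzero X)).
    rewrite hsqnorm_0, sqrt_0. apply Rle_refl.
  - assert (Hunit : hnorm (hscal (/ s) x) <= 1).
    { rewrite hnorm_scal, Rabs_pos_eq by (apply Rlt_le, Rinv_0_lt_compat; lra).
      fold s. rewrite Rinv_l by exact Hs0. lra. }
    assert (HTunit : hnorm (T (hscal (/ s) x)) <= c) by (apply Hub; eauto).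
    rewrite (proj2 T_linear), hnorm_scal, Rabs_pos_eq in HTunit
      by (apply Rlt_le, Rinv_0_lt_compat; lra).
    apply (Rmult_le_compat_l s) in HTunit; [| exact Hs].
    rewrite <- Rmult_assoc, Rinv_r, Rmult_1_l in HTunit by exact Hs0. lra.
Qed.

Lemma op_norm1_sq_contraction : op_norm_is T 1 -> forall x, hsqnorm (T x) <= hsqnorm x.
Proof.
  intros Hn x. apply sqrt_le_0; try apply hsqnorm_ge0.
  rewrite <- (Rmult_1_l (sqrt (hsqnorm x))). apply op_norm_bound, Hn.
Qed.

Lemma fixed_space_sub a b : fixed_space T a -> fixed_space T b -> fixed_space T (hsub a b).
Proof. unfold fixed_space. intros Ha Hb. rewrite linear_sub, Ha, Hb. reflexivity. Qed.

Lemma fixed_of_square_fixed y : ~ is_eigenvalue T (-1) -> T (T y) = y -> T y = y.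
Proof.
  intros Hneg HTT. apply hsub_eq0.
  destruct (Req_dec (hsqnorm (hsub (T y) y)) 0) as [H0 | H0]; [exact (hsqnorm_eq0 _ H0) |].
  exfalso. apply Hneg. exists (hsub (T y) y). split.
  - intros E. rewrite E in H0. apply H0, hsqnorm_0.
  - rewrite linear_sub, HTT, hscal_N1. unfold hsub. rewrite hoppD, hoppK, hadd_comm. reflexivity.
Qed.

Lemma is_linear_comp (S : X -> X) : is_linear S -> is_linear (fun x => T (S x)).
Proof.
  intros [HSadd HSscal]. split; intros.
  - rewrite HSadd, (proj1 T_linear). reflexivity.
  - rewrite HSscal, (proj2 T_linear). reflexivity.
Qed.

Hypothesis T_contraction : forall x, hsqnorm (T x) <= hsqnorm x.

(* [|T y - y|^2 <= 2 |T (y - u_N)|^2 + 2 |u_(N+1) - y|^2], and both terms are small. *)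
Lemma fixed_of_orbit_limit (u : nat -> X) y :
  (forall n, u (S n) = T (u n)) -> sq_converges u y -> T y = y.
Proof.
  intros Hu Hcv. apply hsub_eq0, hsqnorm_eq0, Rle_antisym; [| apply hsqnorm_ge0].
  apply Rnot_lt_le. intros Hpos.
  destruct (Hcv (hsqnorm (hsub (T y) y) / 4)) as [N HN]; [lra |].
  pose proof (hsqnorm_add_le (hsub (T y) (u (S N))) (hsub (u (S N)) y)) as Hsplit.
  rewrite <- hsub_split, Hu, <- linear_sub in Hsplit.
  pose proof (T_contraction (hsub y (u N))) as HT.
  rewrite hsqnorm_subC in HT.
  pose proof (HN N (le_n N)). pose proof (HN (S N) (Nat.le_succ_diag_r N)).
  rewrite Hu in *. lra.
Qed.

Lemma sq_converges_of_even (u : nat -> X) y :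
  (forall n, u (S n) = T (u n)) -> T y = y ->
  sq_converges (fun n => u (n + n)%nat) y -> sq_converges u y.
Proof.
  intros Hu Hy Hcv e He. destruct (Hcv e He) as [N HN]. exists (N + N)%nat.
  intros n Hn. destruct (Nat.Even_or_Odd n) as [[j Hj] | [j Hj]]; subst n.
  - replace (2 * j)%nat with (j + j)%nat by lia. apply HN. lia.
  - replace (2 * j + 1)%nat with (S (j + j)) by lia.
    rewrite Hu, <- Hy at 1. rewrite <- linear_sub.
    eapply Rle_lt_trans; [apply T_contraction |]. apply HN. lia.
Qed.

End LinearMaps.

Section SelfAdjointPowers.
Context {X : Hilbert}.
Variable B : X -> X.
Hypothesis B_linear : is_linear B.
Hypothesis B_self_adjoint : self_adjoint B.
Hypothesis B_contraction : forall x, hsqnorm (B x) <= hsqnorm x.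
Hypothesis B_no_eigen_N1 : ~ is_eigenvalue B (-1).

Lemma iter_fixed n k : B k = k -> Nat.iter n B k = k.
Proof. intros Hk. induction n; simpl; congruence. Qed.

Lemma iter_self_adjoint n x y : hinner (Nat.iter n B x) y = hinner x (Nat.iter n B y).
Proof.
  revert y; induction n; intros y; simpl; [reflexivity |].
  rewrite B_self_adjoint, IHn, <- Nat.iter_swap. reflexivity.
Qed.

Lemma iter_inner_double n m z :
  hinner (Nat.iter (n + n) B z) (Nat.iter (m + m) B z) = hsqnorm (Nat.iter (n + m) B z).
Proof.
  rewrite Nat.iter_add, iter_self_adjoint, <- Nat.iter_add.
  replace (n + (m + m))%nat with (m + (n + m))%nat by lia.
  rewrite Nat.iter_add, <- iter_self_adjoint, <- Nat.iter_add, (Nat.add_comm m n).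
  reflexivity.
Qed.

Variable z : X.

Lemma iter_even_cauchy :
  forall e, e > 0 -> exists N, forall n m, (n >= N)%nat -> (m >= N)%nat ->
    hsqnorm (hsub (Nat.iter (n + n) B z) (Nat.iter (m + m) B z)) < e.
Proof.
  set (d := fun n => hsqnorm (Nat.iter n B z)).
  destruct (decreasing_cv d) as [L HL].
  - intros n. apply B_contraction.
  - exists 0. intros r [n ->]. pose proof (hsqnorm_ge0 (Nat.iter n B z)). unfold opp_seq, d. lra.
  - intros e He. destruct (HL (e / 4)) as [N HN]; [lra |].
    exists N. intros n m Hn Hm.
    rewrite hsqnorm_sub, iter_inner_double.
    pose proof (HN (n + n)%nat ltac:(lia)) as H1.
    pose proof (HN (n + m)%nat ltac:(lia)) as H2.
    pose proof (HN (m + m)%nat ltac:(lia)) as H3.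
    unfold R_dist, d in *. apply Rabs_def2 in H1, H2, H3. lra.
Qed.

Lemma iter_converges_fixed :
  exists y, B y = y /\ sq_converges (fun n => Nat.iter n B z) y /\
    (forall k, B k = k -> hinner y k = hinner z k).
Proof.
  destruct (sq_cauchy_converges _ iter_even_cauchy) as [y Hy].
  assert (HBBy : B (B y) = y).
  { apply (fixed_of_orbit_limit (fun x => B (B x)) (is_linear_comp B B_linear B B_linear)
             (fun x => Rle_trans _ _ _ (B_contraction (B x)) (B_contraction x))
             (fun n => Nat.iter (n + n) B z)); [| exact Hy].
    intros n. simpl. rewrite <- plus_n_Sm. reflexivity. }
  assert (HBy : B y = y) by (apply fixed_of_square_fixed; assumption).
  exists y. split; [exact HBy | split].
  - apply (sq_converges_of_even B B_linear B_contraction); [reflexivity | exact HBy | exact Hy].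
  - intros k Hk. apply (sq_limit_inner _ _ _ _ Hy). intros n.
    rewrite iter_self_adjoint, iter_fixed by exact Hk. reflexivity.
Qed.

End SelfAdjointPowers.

Section OrthogonalProjection.
Context {X : Hilbert}.
Variables (K : X -> Prop) (P : X -> X).
Hypothesis P_orth : is_orth_proj K P.
Hypothesis K_sub : forall a b, K a -> K b -> K (hsub a b).

Lemma orth_proj_inner x k : K k -> hinner x k = hinner (P x) k.
Proof. intros Hk. pose proof (proj2 (P_orth x) k Hk) as H. rewrite hinner_subl in H. lra. Qed.

Lemma orth_proj_eq_of_inner a b :
  (forall k, K k -> hinner a k = hinner b k) -> P a = P b.
Proof.
  intros Hab. assert (Hv : K (hsub (P a) (P b))) by (apply K_sub; apply P_orth).
  apply hsub_eq0, hsqnorm_eq0. unfold hsqnorm.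
  rewrite hinner_subl, <- !orth_proj_inner, Hab by exact Hv. ring.
Qed.

Lemma orth_proj_inj a b : K (hsub a b) -> P a = P b -> a = b.
Proof.
  intros Hab HP. apply hsub_eq0, hsqnorm_eq0. unfold hsqnorm.
  rewrite hinner_subl, (orth_proj_inner a _ Hab), (orth_proj_inner b _ Hab), HP. ring.
Qed.

End OrthogonalProjection.

Section AffineIteration.
Context {X : Hilbert}.
Variables (B : X -> X) (f xh : X).
Hypothesis B_linear : is_linear B.
Hypothesis xh_solution : xh = hadd (B xh) f.

Lemma iterates_offset x0 n :
  iterates B f x0 n = hadd xh (Nat.iter n B (hsub x0 xh)).
Proof.
  induction n; simpl.
  - rewrite hadd_subK. reflexivity.
  - rewrite IHn, (proj1 B_linear), hadd_AC, <- xh_solution. reflexivity.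
Qed.

Lemma solution_add_fixed y : B y = y -> hadd xh y = hadd (B (hadd xh y)) f.
Proof. intros Hy. rewrite (proj1 B_linear), hadd_AC, <- xh_solution, Hy. reflexivity. Qed.

End AffineIteration.

Lemma solutions_sub_fixed {X : Hilbert} (B : X -> X) (f y1 y2 : X) : is_linear B ->
  y1 = hadd (B y1) f -> y2 = hadd (B y2) f -> fixed_space B (hsub y1 y2).
Proof.
  intros HL Hy1 Hy2. unfold fixed_space. rewrite linear_sub by exact HL.
  rewrite <- (hsubDr _ _ f), <- Hy1, <- Hy2. reflexivity.
Qed.

Theorem theorem1p1 (X : Hilbert) (B : X -> X) (f : X) (P : X -> X)
  (HBlin : is_bounded_linear B)
  (HBsa : self_adjoint B)
  (Hrho : spectral_radius_is B 1)
  (Hnorm : op_norm_is B 1)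
  (Hneg : ~ is_eigenvalue B (-1))
  (Hsol : exists x : X, x = hadd (B x) f)
  (HP : is_orth_proj (fixed_space B) P) :
  forall x0 : X,
    exists xs : X,
      xs = hadd (B xs) f /\ P xs = P x0 /\
      (forall y : X, y = hadd (B y) f -> P y = P x0 -> y = xs) /\
      hconverges (iterates B f x0) xs.
Proof.
  destruct HBlin as [HL _]. destruct Hsol as [xh Hxh]. intros x0.
  pose proof (op_norm1_sq_contraction B HL Hnorm) as Hcontr.
  destruct (iter_converges_fixed B HL HBsa Hcontr Hneg (hsub x0 xh)) as [y [Hy [Hcv Horth]]].
  pose proof (fixed_space_sub B HL) as Hsub.
  assert (HPxs : P (hadd xh y) = P x0).
  { apply (orth_proj_eq_of_inner _ _ HP Hsub). intros k Hk.
    rewrite hinner_addl, Horth, hinner_subl by exact Hk. ring. }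
  pose proof (solution_add_fixed B f xh HL Hxh y Hy) as Hxs.
  exists (hadd xh y). split; [exact Hxs | split; [exact HPxs | split]].
  - intros y' Hy' HPy'. apply (orth_proj_inj _ _ HP).
    + exact (solutions_sub_fixed B f y' (hadd xh y) HL Hy' Hxs).
    + congruence.
  - apply hconverges_of_sq. intros e He. destruct (Hcv e He) as [N HN].
    exists N. intros n Hn. rewrite (iterates_offset B f xh HL Hxh), hsubDl. exact (HN n Hn).
Qed.
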